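(* Let $M,N,K$ be symmetric homogeneous bi-variate means having symmetric asymptotic expansions with coefficients $(a^M_n)$, $(a^N_n)$, $(a^K_n)$. Suppose $K$ and $M$ are stable and $N$ is $(K,M)$-stabilizable, i.e. $N(s,t)=K\big(N(s,M(s,t)),N(M(s,t),t)\big)$ for all $s,t>0$. Then $a^N_0=1$ and for $m\ge1$ $$a^N_m=\frac{2^{2m}}{2^{2m}-1}\Big[\frac12\sum_{n=0}^{m-1}a^N_n\sum_{k=0}^{2m-2n}P[k,2n,\mathbf g^M]P[2m-2n-k,-2n+1,\mathbf h^M]+\sum_{n=1}^ma^K_n\sum_{k=0}^{m-n}P[k,2n,\mathbf d]P[m-n-k,-2n+1,\mathbf s]\Big],$$ with $\mathbf d,\mathbf s$ defined by $d_m=-\frac12\sum_{n=0}^ma^N_n\sum_{k=0}^{2m+1-2n}P[k,2n,\mathbf g^M]P[2m+1-2n-k,-2n+1,\mathbf h^M]$ and $s_m=\frac12\sum_{n=0}^ma^N_n\sum_{k=0}^{2m-2n}P[k,2n,\mathbf g^M]P[2m-2n-k,-2n+1,\mathbf h^M]$. In particular $a^N_1=\frac13(a^K_1+2a^M_1)$.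
   Context: A bi-variate mean is $M:(0,\infty)^2\to(0,\infty)$ with $\min(s,t)\le M(s,t)\le\max(s,t)$; symmetric and homogeneous (degree 1) as usual. $M$ is stable if $M(s,t)=M\big(M(s,M(s,t)),M(M(s,t),t)\big)$. For two nontrivial stable means $K,M$, a mean $N$ is $(K,M)$-stabilizable if $N(s,t)=K\big(N(s,M(s,t)),N(M(s,t),t)\big)$ for all $s,t>0$. A mean has a symmetric asymptotic expansion with coefficients $(a_n)$ if for every fixed real $t$ and $N\ge0$, $M(x-t,x+t)=\sum_{n=0}^Na_nt^{2n}x^{-2n+1}+o(x^{-2N+1})$ as $x\to\infty$. For a sequence $\mathbf b$ with $b_0\ne0$, $r\in\mathbb R$: $P[0,r,\mathbf b]=b_0^r$, $P[n,r,\mathbf b]=\frac1{nb_0}\sum_{k=1}^n(k(1+r)-n)b_kP[n-k,r,\mathbf b]$ ($n\ge1$), i.e. the coefficient of $z^n$ in $(\sum_jb_jz^j)^r$. $\mathbf g^M=(1,a^M_1,0,a^M_2,0,\ldots)$ ($g_0=1$, $g_{2k-1}=a^M_k$, $g_{2k}=0$), $\mathbf h^M=(2,-1,a^M_1,0,a^M_2,0,\ldots)$ ($h_0=2$, $h_1=-1$, $h_{2k}=a^M_k$, $h_{2k+1}=0$), $k\ge1$. *)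

From Stdlib Require Import Reals ZArith Arith.
From Coquelicot Require Import Coquelicot.
Open Scope R_scope.

(** Bi-variate means on (0,oo)^2, represented as total functions R -> R -> R
    whose values are only constrained on positive arguments. *)
Definition is_mean (M : R -> R -> R) : Prop :=
  forall s t, 0 < s -> 0 < t -> Rmin s t <= M s t <= Rmax s t.

Definition is_symmetric (M : R -> R -> R) : Prop :=
  forall s t, 0 < s -> 0 < t -> M s t = M t s.

Definition is_homogeneous (M : R -> R -> R) : Prop :=
  forall l s t, 0 < l -> 0 < s -> 0 < t -> M (l * s) (l * t) = l * M s t.

Definition is_stable (M : R -> R -> R) : Prop :=
  forall s t, 0 < s -> 0 < t ->
    M s t = M (M s (M s t)) (M (M s t) t).

Definition is_stabilizable (K M N : R -> R -> R) : Prop :=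
  forall s t, 0 < s -> 0 < t ->
    N s t = K (N s (M s t)) (N (M s t) t).

Definition has_sym_asymp_exp (M : R -> R -> R) (a : nat -> R) : Prop :=
  forall (t : R) (N : nat),
    is_lim
      (fun x => (M (x - t) (x + t)
                 - sum_f_R0 (fun n => a n * t ^ (2 * n)
                                      * powerRZ x (1 - 2 * Z.of_nat n)%Z) N)
                / powerRZ x (1 - 2 * Z.of_nat N)%Z)
      p_infty (Finite 0).

(** P[n,r,b]: P[0] = b_0^r,
    P[n] = 1/(n b_0) * sum_{k=1}^n (k(1+r)-n) b_k P[n-k]  (n >= 1).
    Only integer exponents r occur in the theorem, so r : Z (b_0^r = powerRZ). *)
Fixpoint Paux (fuel : nat) (n : nat) (r : Z) (b : nat -> R) : R :=
  match fuel with
  | O => powerRZ (b O) r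
  | S f =>
      match n with
      | O => powerRZ (b O) r
      | S n' =>
          / (INR n * b O) *
          sum_f_R0 (fun j => (INR (S j) * (1 + IZR r) - INR n) * b (S j)
                             * Paux f (n - S j) r b) n'
      end
  end.

Definition P (n : nat) (r : Z) (b : nat -> R) : R := Paux n n r b.

(** g^M = (1, a_1, 0, a_2, 0, ...) *)
Definition gseq (a : nat -> R) (n : nat) : R :=
  match n with
  | O => 1
  | _ => if Nat.odd n then a (S n / 2)%nat else 0
  end.

(** h^M = (2, -1, a_1, 0, a_2, 0, ...) *)
Definition hseq (a : nat -> R) (n : nat) : R :=
  match n with
  | O => 2
  | 1%nat => -1
  | _ => if Nat.even n then a (n / 2)%nat else 0
  end.

Definition inner (aM aN : nat -> R) (m L : nat) : R :=
  sum_f_R0 (fun n => aN n *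
     sum_f_R0 (fun k => P k (2 * Z.of_nat n)%Z (gseq aM)
                        * P (L - 2 * n - k) (1 - 2 * Z.of_nat n)%Z (hseq aM))
              (L - 2 * n)) m.

Definition dseq (aM aN : nat -> R) (m : nat) : R :=
  - / 2 * inner aM aN m (2 * m + 1).

Definition sseq (aM aN : nat -> R) (m : nat) : R :=
  / 2 * inner aM aN m (2 * m).

From Stdlib Require Import Reals ZArith Arith Lra Lia Psatz.
From Coquelicot Require Import Coquelicot.
Open Scope R_scope.

(** We work with the profile [z |-> X(1-z, 1+z)] of a mean [X]: by homogeneity, a
    symmetric asymptotic expansion of [X] with coefficients [a] is the same as an
    expansion [X(1-z, 1+z) = sum_n a_n z^(2n) + o(z^(2N))] at [0+] ([expands_profile]).

    1. A small calculus of finite expansions at 0 ([expands]): sums, products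
       (Cauchy product [conv]), quotients, uniqueness of coefficients, and integer
       powers, whose coefficients are [P[n,r,b]] ([expands_pow]); [P] is handled
       through the differential relation it satisfies ([power_rel]).
    2. Substitution into a mean: [X(u-v, u+v) = sum_j a_j v^(2j) u^(1-2j) + o(z^(2J))]
       when [v = O(z)] and [u] stays away from 0 ([expands_mean_series]).
    3. Stabilizability at [(1-z, 1+z)] reads [N(1-z, 1+z) = K(U-V, U+V)] with
       [U -+ V = N(1 -+ z, M(1-z, 1+z))] ([profile_stabilized]).  Step 2 applied to
       [N] shows that [U] and [V/z] have the coefficients [s_m] and [d_m] on even
       powers ([expands_Ufun], [expands_Vfun_div]); step 2 applied to [K] and
       uniqueness of coefficients give an identity for [a^N_m] ([coef_identity]),
       in which [a^N_m] also occurs through [s_m]; solving it yields the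
       recurrence ([aN_recurrence]), and [m = 1] gives [a^N_1]. *)

Definition near0 (dom : R -> Prop) (Q : R -> Prop) : Prop :=
  exists del, 0 < del /\ forall z, dom z -> z <> 0 -> Rabs z < del -> Q z.

Lemma near0_and dom (Q1 Q2 : R -> Prop) :
  near0 dom Q1 -> near0 dom Q2 -> near0 dom (fun z => Q1 z /\ Q2 z).
Proof.
  intros [d1 [Hd1 H1]] [d2 [Hd2 H2]].
  exists (Rmin d1 d2); split; [now apply Rmin_pos|].
  intros z Dz z0 zd; apply Rmin_Rgt in zd as [zd1 zd2]; auto.
Qed.

Lemma near0_impl dom (Q1 Q2 : R -> Prop) :
  (forall z, dom z -> z <> 0 -> Q1 z -> Q2 z) -> near0 dom Q1 -> near0 dom Q2.
Proof. intros H [d [Hd Hz]]; exists d; split; auto. Qed.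

Lemma near0_lt dom d : 0 < d -> near0 dom (fun z => Rabs z < d).
Proof. intros Hd; exists d; split; auto. Qed.

Definition tends (dom : R -> Prop) (f : R -> R) (l : R) : Prop :=
  forall eps, 0 < eps -> near0 dom (fun z => Rabs (f z - l) <= eps).

(** [dom] accumulates at 0; this makes limits along [dom] unique. *)
Definition dense0 (dom : R -> Prop) : Prop :=
  forall d, 0 < d -> exists z, dom z /\ z <> 0 /\ Rabs z < d.

Lemma tends_congr dom f g l :
  near0 dom (fun z => f z = g z) -> tends dom f l -> tends dom g l.
Proof.
  intros Hfg Hf eps Heps.
  apply (near0_impl dom (fun z => f z = g z /\ Rabs (f z - l) <= eps)).
  - intros z _ _ [E Hz]; now rewrite <- E.
  - now apply near0_and; [|apply Hf].
Qed.

Lemma tends_const dom a : tends dom (fun _ => a) a.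
Proof.
  intros eps Heps; exists 1; split; [lra|].
  intros; rewrite Rminus_diag, Rabs_R0; lra.
Qed.

Lemma tends_id dom : tends dom (fun z => z) 0.
Proof.
  intros eps Heps; exists eps; split; auto.
  intros; rewrite Rminus_0_r; lra.
Qed.

Lemma tends_bounded dom f l :
  tends dom f l -> near0 dom (fun z => Rabs (f z) <= Rabs l + 1).
Proof.
  intros Hf; eapply near0_impl; [|exact (Hf 1 Rlt_0_1)].
  intros z _ _ H; pose proof (Rabs_triang_inv (f z) l); lra.
Qed.

Lemma tends_away dom f l :
  l <> 0 -> tends dom f l -> near0 dom (fun z => Rabs l / 2 <= Rabs (f z)).
Proof.
  intros Hl Hf; pose proof (Rabs_pos_lt l Hl) as Hpos.
  eapply near0_impl; [|apply (Hf (Rabs l / 2)); lra].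
  intros z _ _ Hz; cbv beta in Hz; rewrite Rabs_minus_sym in Hz.
  pose proof (Rabs_triang_inv l (f z)); lra.
Qed.

Lemma tends_mul dom f g a b :
  tends dom f a -> tends dom g b -> tends dom (fun z => f z * g z) (a * b).
Proof.
  intros Hf Hg eps Heps.
  pose proof (Rabs_pos a); pose proof (Rabs_pos b).
  set (e := eps / (Rabs a + 1 + Rabs b)).
  assert (He : 0 < e) by (unfold e; apply Rdiv_lt_0_compat; lra).
  assert (Ee : (Rabs a + 1 + Rabs b) * e = eps) by (unfold e; field; lra).
  apply (near0_impl dom (fun z =>
    (Rabs (f z) <= Rabs a + 1 /\ Rabs (f z - a) <= e) /\ Rabs (g z - b) <= e)).
  - intros z _ _ [[Bf Ef] Eg].
    replace (f z * g z - a * b) with (f z * (g z - b) + b * (f z - a)) by ring.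
    eapply Rle_trans; [apply Rabs_triang|]; rewrite !Rabs_mult, <- Ee.
    pose proof (Rabs_pos (f z)); pose proof (Rabs_pos (g z - b)); nra.
  - repeat apply near0_and; auto using tends_bounded.
Qed.

Lemma tends_inv dom f a : a <> 0 -> tends dom f a -> tends dom (fun z => / f z) (/ a).
Proof.
  intros Ha Hf eps Heps; pose proof (Rabs_pos_lt a Ha).
  apply (near0_impl dom (fun z =>
    Rabs a / 2 <= Rabs (f z) /\ Rabs (f z - a) <= eps * (Rabs a * Rabs a) / 2)).
  - intros z _ _ [Lo Ef].
    assert (fz : f z <> 0) by (intro E; rewrite E, Rabs_R0 in Lo; lra).
    replace (/ f z - / a) with ((a - f z) * (/ f z * / a)) by (field; auto).
    rewrite !Rabs_mult, !Rabs_inv, Rabs_minus_sym.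
    apply Rle_trans with (eps * (Rabs a * Rabs a) / 2 * (/ (Rabs a / 2) * / Rabs a)).
    + apply Rmult_le_compat; auto using Rabs_pos.
      * apply Rmult_le_pos; left; apply Rinv_0_lt_compat; lra.
      * apply Rmult_le_compat_r; [left; apply Rinv_0_lt_compat; lra|].
        apply Rinv_le_contravar; lra.
    + right; field; lra.
  - apply near0_and; [now apply tends_away|].
    apply Hf; unfold Rdiv; repeat apply Rmult_lt_0_compat; lra.
Qed.

Lemma tends_unique dom f l l' : dense0 dom -> tends dom f l -> tends dom f l' -> l = l'.
Proof.
  intros Hd Hl Hl'; destruct (Req_dec l l') as [E|E]; auto; exfalso.
  set (e := Rabs (l - l') / 3).
  assert (He : 0 < e) by (unfold e; apply Rdiv_lt_0_compat; [apply Rabs_pos_lt|]; lra).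
  destruct (near0_and _ _ _ (Hl e He) (Hl' e He)) as [d [Hd0 Hz]].
  destruct (Hd d Hd0) as [z [Dz [z0 zd]]]; destruct (Hz z Dz z0 zd) as [H1 H2].
  pose proof (Rabs_triang (l - f z) (f z - l')) as T.
  rewrite Rabs_minus_sym in T; replace (l - f z + (f z - l')) with (l - l') in T by ring.
  unfold e in *; lra.
Qed.

(** ** Finite expansions at 0 *)

Definition poly_sum (c : nat -> R) (n : nat) (z : R) : R :=
  sum_f_R0 (fun k => c k * z ^ k) n.

Definition expands (dom : R -> Prop) (f : R -> R) (c : nat -> R) (n : nat) : Prop :=
  forall eps, 0 < eps ->
    near0 dom (fun z => Rabs (f z - poly_sum c n z) <= eps * Rabs z ^ n).

Definition tail (c : nat -> R) (k : nat) : R := c (S k).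

Lemma poly_sum_S c n z : poly_sum c (S n) z = c 0%nat + z * poly_sum (tail c) n z.
Proof.
  unfold poly_sum, tail; rewrite decomp_sum by lia; simpl pred.
  rewrite scal_sum; f_equal; [simpl; ring|]; apply sum_eq; intros; simpl; ring.
Qed.

Lemma expands_0 dom f c : expands dom f c 0 <-> tends dom f (c 0%nat).
Proof.
  unfold expands, tends, poly_sum; simpl.
  split; intros H eps Heps; eapply near0_impl; try exact (H eps Heps);
    intros z _ _; now rewrite !Rmult_1_r.
Qed.

Lemma expands_tail dom f c n :
  expands dom f c (S n) <-> expands dom (fun z => (f z - c 0%nat) / z) (tail c) n.
Proof.
  split; intros H eps Heps; eapply near0_impl; try exact (H eps Heps);
    intros z _ z0 Hz; cbv beta in *.
  - replace ((f z - c 0%nat) / z - poly_sum (tail c) n z)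
      with ((f z - poly_sum c (S n) z) / z) by (rewrite poly_sum_S; field; auto).
    unfold Rdiv; rewrite Rabs_mult, Rabs_inv.
    apply Rmult_le_reg_r with (Rabs z); [now apply Rabs_pos_lt|].
    rewrite Rmult_assoc, Rinv_l by now apply Rabs_no_R0.
    simpl in Hz; lra.
  - replace (f z - poly_sum c (S n) z)
      with (((f z - c 0%nat) / z - poly_sum (tail c) n z) * z)
      by (rewrite poly_sum_S; field; auto).
    rewrite Rabs_mult; simpl.
    replace (eps * (Rabs z * Rabs z ^ n)) with (eps * Rabs z ^ n * Rabs z) by ring.
    apply Rmult_le_compat_r; auto using Rabs_pos.
Qed.

(** Lowering the order: the tail [(f z - c_0)/z] is bounded, so [f z - c_0 -> 0]. *)
Lemma expands_weaken dom f c n : expands dom f c (S n) -> expands dom f c n.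
Proof.
  revert f c; induction n as [|n IH]; intros f c H; apply expands_tail in H.
  - apply expands_0 in H; apply expands_0.
    pose proof (tends_mul _ _ _ _ _ (tends_id dom) H) as Hz.
    intros eps Heps; eapply near0_impl; [|exact (Hz eps Heps)].
    intros z _ z0; cbv beta.
    replace (z * ((f z - c 0%nat) / z) - 0 * tail c 0%nat) with (f z - c 0%nat)
      by (field; auto); auto.
  - apply expands_tail, IH, H.
Qed.

Lemma expands_le dom f c n m : (n <= m)%nat -> expands dom f c m -> expands dom f c n.
Proof. intros Hle; induction Hle; auto using expands_weaken. Qed.

Lemma expands_tends dom f c n : expands dom f c n -> tends dom f (c 0%nat).
Proof. intros H; apply expands_0, (expands_le _ _ _ _ n); auto; lia. Qed.

Lemma expands_congr_near dom f g c n :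
  near0 dom (fun z => f z = g z) -> expands dom f c n -> expands dom g c n.
Proof.
  intros Hfg H eps Heps.
  eapply near0_impl; [|exact (near0_and _ _ _ Hfg (H eps Heps))].
  intros z _ _ [E Hz]; now rewrite <- E.
Qed.

Lemma expands_congr dom f g c n :
  (forall z, z <> 0 -> f z = g z) -> expands dom f c n -> expands dom g c n.
Proof.
  intros Hfg; apply expands_congr_near.
  exists 1; split; [lra|]; auto.
Qed.

Lemma expands_coef_congr dom f c d n :
  (forall k, (k <= n)%nat -> c k = d k) -> expands dom f c n -> expands dom f d n.
Proof.
  intros Hcd H eps Heps; eapply near0_impl; [|exact (H eps Heps)].
  intros z _ _; cbv beta; unfold poly_sum; rewrite (sum_eq _ (fun k => d k * z ^ k)); auto.
  intros k Hk; now rewrite Hcd.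
Qed.

Lemma poly_sum_add a b n z :
  poly_sum (fun k => a k + b k) n z = poly_sum a n z + poly_sum b n z.
Proof. unfold poly_sum; rewrite <- plus_sum; apply sum_eq; intros; ring. Qed.

Lemma poly_sum_scale l a n z : poly_sum (fun k => l * a k) n z = l * poly_sum a n z.
Proof. unfold poly_sum; rewrite scal_sum; apply sum_eq; intros; ring. Qed.

Lemma expands_add dom f g a b n : expands dom f a n -> expands dom g b n ->
  expands dom (fun z => f z + g z) (fun k => a k + b k) n.
Proof.
  intros Hf Hg eps Heps.
  eapply near0_impl; [|apply near0_and; [apply (Hf (eps / 2))|apply (Hg (eps / 2))]; lra].
  intros z _ _ [H1 H2]; cbv beta in *; rewrite poly_sum_add.
  replace (f z + g z - (poly_sum a n z + poly_sum b n z))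
    with ((f z - poly_sum a n z) + (g z - poly_sum b n z)) by ring.
  eapply Rle_trans; [apply Rabs_triang|lra].
Qed.

Lemma expands_scale dom f a l n :
  expands dom f a n -> expands dom (fun z => l * f z) (fun k => l * a k) n.
Proof.
  intros Hf eps Heps; pose proof (Rabs_pos l).
  eapply near0_impl; [|apply (Hf (eps / (Rabs l + 1))); apply Rdiv_lt_0_compat; lra].
  intros z _ _ Hz; cbv beta in *; rewrite poly_sum_scale.
  replace (l * f z - l * poly_sum a n z) with (l * (f z - poly_sum a n z)) by ring.
  rewrite Rabs_mult.
  assert (Hp : 0 <= eps * Rabs z ^ n) by (apply Rmult_le_pos; [lra|apply pow_le, Rabs_pos]).
  apply Rle_trans with (Rabs l * (eps / (Rabs l + 1) * Rabs z ^ n));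
    [apply Rmult_le_compat_l; auto|].
  replace (Rabs l * (eps / (Rabs l + 1) * Rabs z ^ n))
    with (eps * Rabs z ^ n * (Rabs l / (Rabs l + 1))) by (field; lra).
  rewrite <- (Rmult_1_r (eps * Rabs z ^ n)) at 2; apply Rmult_le_compat_l; auto.
  apply Rmult_le_reg_r with (Rabs l + 1); [lra|]; field_simplify; lra.
Qed.

Definition cst (a : R) (k : nat) : R := match k with O => a | S _ => 0 end.

Lemma expands_const dom a n : expands dom (fun _ => a) (cst a) n.
Proof.
  intros eps Heps; exists 1; split; [lra|]; intros z _ _ _; cbv beta.
  replace (poly_sum (cst a) n z) with a.
  - rewrite Rminus_diag, Rabs_R0; apply Rmult_le_pos; [lra|apply pow_le, Rabs_pos].
  - induction n as [|n IH]; unfold poly_sum in *; simpl; [ring|rewrite <- IH; ring].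
Qed.

Lemma expands_poly dom c n : expands dom (poly_sum c n) c n.
Proof.
  intros eps Heps; exists 1; split; [lra|]; intros z _ _ _; cbv beta.
  rewrite Rminus_diag, Rabs_R0; apply Rmult_le_pos; [lra|apply pow_le, Rabs_pos].
Qed.

Lemma expands_sum dom (F : nat -> R -> R) (c : nat -> nat -> R) J n :
  (forall j, (j <= J)%nat -> expands dom (F j) (c j) n) ->
  expands dom (fun z => sum_f_R0 (fun j => F j z) J) (fun k => sum_f_R0 (fun j => c j k) J) n.
Proof.
  intros H; induction J as [|J IH]; simpl; [apply H; lia|].
  apply expands_add; [apply IH; intros j Hj|]; apply H; lia.
Qed.

Definition delta (j k : nat) : R := if Nat.eqb k j then 1 else 0.

Lemma expands_monomial dom j n : expands dom (fun z => z ^ j) (delta j) n.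
Proof.
  revert j; induction n as [|n IH]; intros j.
  - apply expands_0; replace (delta j 0) with (0 ^ j) by (destruct j; unfold delta; simpl; ring).
    induction j as [|j IHj]; [exact (tends_const dom 1)|exact (tends_mul _ _ _ _ _ (tends_id dom) IHj)].
  - apply expands_tail; destruct j as [|j].
    + apply (expands_coef_congr _ _ (cst 0)); [intros k _; now destruct k|].
      eapply expands_congr; [|apply expands_const]; intros z z0.
      unfold delta; simpl; field; auto.
    + eapply expands_congr; [|apply (IH j)]; intros z z0.
      unfold delta; simpl; field; auto.
Qed.

Definition conv (a b : nat -> R) (n : nat) : R :=
  sum_f_R0 (fun i => a i * b (n - i)%nat) n.

Lemma conv_S a b k : conv a b (S k) = conv a (tail b) k + a (S k) * b 0%nat.
Proof.
  unfold conv; rewrite tech5, Nat.sub_diag; f_equal.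
  apply sum_eq; intros i Hi; unfold tail; now replace (S k - i)%nat with (S (k - i)) by lia.
Qed.

Lemma expands_mul dom f g a b n : expands dom f a n -> expands dom g b n ->
  expands dom (fun z => f z * g z) (conv a b) n.
Proof.
  revert f g a b; induction n as [|n IH]; intros f g a b Hf Hg.
  - apply expands_0 in Hf, Hg; apply expands_0, (tends_mul _ _ _ _ _ Hf Hg).
  - apply expands_tail; apply expands_tail in Hg.
    pose proof (proj1 (expands_tail dom f a n) Hf) as Hf'; apply expands_weaken in Hf.
    pose proof (expands_add _ _ _ _ _ _ (IH _ _ _ _ Hf Hg)
                  (expands_scale _ _ _ (b 0%nat) _ Hf')) as Hsum.
    eapply expands_coef_congr; [|eapply expands_congr; [|exact Hsum]].
    + intros k _; unfold tail at 3; rewrite conv_S; unfold tail; ring.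
    + intros z z0; cbv beta; unfold conv; simpl; field; auto.
Qed.

Lemma expands_div dom f g a c n : expands dom f a n -> a 0%nat <> 0 ->
  expands dom (fun z => f z * g z) (conv a c) n -> expands dom g c n.
Proof.
  revert g c; induction n as [|n IH]; intros g c Hf Ha Hfg.
  - apply expands_0 in Hf, Hfg; apply expands_0.
    replace (c 0%nat) with (conv a c 0 * / a 0%nat) by (unfold conv; simpl; field; auto).
    eapply tends_congr; [|exact (tends_mul _ _ _ _ _ Hfg (tends_inv _ _ _ Ha Hf))].
    eapply near0_impl; [|exact (tends_away _ _ _ Ha Hf)].
    intros z _ _ Hz; cbv beta in *.
    assert (f z <> 0) by (intro E; rewrite E, Rabs_R0 in Hz; pose proof (Rabs_pos_lt _ Ha); lra).
    field; auto.
  - apply expands_tail; apply expands_tail in Hfg.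
    pose proof (proj1 (expands_tail dom f a n) Hf) as Hf'; apply expands_weaken in Hf.
    apply (IH _ _ Hf Ha).
    pose proof (expands_add _ _ _ _ _ _ Hfg (expands_scale _ _ _ (- c 0%nat) _ Hf')) as Hsum.
    eapply expands_coef_congr; [|eapply expands_congr; [|exact Hsum]].
    + intros k _; unfold tail at 1; rewrite conv_S; unfold tail; ring.
    + intros z z0; cbv beta; unfold conv; simpl; field; auto.
Qed.

Lemma expands_unique dom f c d n : dense0 dom -> expands dom f c n -> expands dom f d n ->
  forall k, (k <= n)%nat -> c k = d k.
Proof.
  intros Hd; revert f c d; induction n as [|n IH]; intros f c d Hc Hdd k Hk.
  - replace k with 0%nat by lia; apply expands_0 in Hc, Hdd; exact (tends_unique _ _ _ _ Hd Hc Hdd).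
  - assert (E0 : c 0%nat = d 0%nat) by (apply (IH f); auto using expands_weaken; lia).
    apply expands_tail in Hc, Hdd; rewrite <- E0 in Hdd.
    destruct k as [|k]; auto; exact (IH _ _ _ Hc Hdd k ltac:(lia)).
Qed.

(** ** Algebra of Cauchy products, proved by comparing expansions of polynomials *)

Definition everywhere (z : R) : Prop := True.

Lemma dense0_everywhere : dense0 everywhere.
Proof. intros d Hd; exists (d / 2); repeat split; [lra|rewrite Rabs_pos_eq; lra]. Qed.

Lemma conv_comm a b n : conv a b n = conv b a n.
Proof.
  apply (expands_unique everywhere (fun z => poly_sum a n z * poly_sum b n z) _ _ n
           dense0_everywhere); auto; [apply expands_mul; apply expands_poly|].
  eapply expands_congr; [|apply expands_mul; apply expands_poly]; intros; simpl; ring.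
Qed.

Lemma conv_assoc a b c n : conv a (conv b c) n = conv (conv a b) c n.
Proof.
  apply (expands_unique everywhere
           (fun z => poly_sum a n z * (poly_sum b n z * poly_sum c n z)) _ _ n
           dense0_everywhere); auto.
  - apply expands_mul; [|apply expands_mul]; apply expands_poly.
  - eapply expands_congr; [|apply expands_mul; [apply expands_mul|]; apply expands_poly].
    intros; simpl; ring.
Qed.

Lemma conv_ext_l a a' b n : (forall k, (k <= n)%nat -> a k = a' k) -> conv a b n = conv a' b n.
Proof. intros H; unfold conv; apply sum_eq; intros; rewrite H; auto. Qed.

Lemma conv_ext_r a b b' n : (forall k, (k <= n)%nat -> b k = b' k) -> conv a b n = conv a b' n.
Proof. intros H; unfold conv; apply sum_eq; intros; rewrite H; auto; lia. Qed.

Lemma conv_scale_r a b l n : conv a (fun k => l * b k) n = l * conv a b n.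
Proof. unfold conv; rewrite scal_sum; apply sum_eq; intros; ring. Qed.

Lemma conv_scale_l a b l n : conv (fun k => l * a k) b n = l * conv a b n.
Proof. rewrite conv_comm, conv_scale_r, conv_comm; reflexivity. Qed.

Lemma sum_zero f n : (forall i, (i <= n)%nat -> f i = 0) -> sum_f_R0 f n = 0.
Proof.
  intros H; induction n as [|n IH]; simpl; [apply H; lia|].
  rewrite IH, H; [ring|lia|intros; apply H; lia].
Qed.

Lemma sum_single f n j : (j <= n)%nat -> (forall i, (i <= n)%nat -> i <> j -> f i = 0) ->
  sum_f_R0 f n = f j.
Proof.
  intros Hj H; induction n as [|n IH]; [now replace j with 0%nat by lia|simpl].
  destruct (Nat.eq_dec j (S n)) as [->|Hne].
  - rewrite sum_zero; [ring|intros; apply H; lia].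
  - rewrite (H (S n)), IH by (lia || (intros; apply H; lia)); ring.
Qed.

Lemma sum_trunc f n k : (k <= n)%nat -> (forall j, (k < j <= n)%nat -> f j = 0) ->
  sum_f_R0 f n = sum_f_R0 f k.
Proof.
  intros Hk H; induction Hk as [|m Hk IH]; auto; simpl.
  rewrite IH, (H (S m)); [ring|lia|intros; apply H; lia].
Qed.

Lemma conv_delta j x L : conv (delta j) x L = if Nat.leb j L then x (L - j)%nat else 0.
Proof.
  unfold conv, delta; destruct (Nat.leb j L) eqn:E.
  - apply Nat.leb_le in E; rewrite (sum_single _ _ j E), Nat.eqb_refl; [ring|].
    intros i _ Hi; apply Nat.eqb_neq in Hi; rewrite Hi; ring.
  - apply Nat.leb_gt in E; apply sum_zero; intros i Hi.
    replace (Nat.eqb i j) with false by (symmetry; apply Nat.eqb_neq; lia); ring.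
Qed.

(** [z d/dz] on coefficient sequences, and the Leibniz rule for it. *)
Definition Dv (c : nat -> R) (k : nat) : R := INR k * c k.

Lemma Dv_conv a b n : Dv (conv a b) n = conv (Dv a) b n + conv a (Dv b) n.
Proof.
  unfold Dv, conv; rewrite scal_sum, <- plus_sum; apply sum_eq; intros i Hi.
  rewrite minus_INR by lia; ring.
Qed.

(** ** The power coefficients [P[n,r,b]]

    [Q = (P[n,r,b])_n] is the unique sequence with [Q_0 = b_0^r] satisfying
    [r (z b') Q = b (z Q')], the coefficient form of [z (b^r)' = r b' b^(r-1) z].
    All properties of [P] are derived from this characterisation. *)

Lemma Paux_fuel m : forall f1 f2 r b, (m <= f1)%nat -> (m <= f2)%nat ->
  Paux f1 m r b = Paux f2 m r b.
Proof.
  induction m as [m IH] using lt_wf_ind; intros f1 f2 r b H1 H2.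
  destruct m as [|m]; [destruct f1, f2; reflexivity|].
  destruct f1 as [|f1]; [lia|]; destruct f2 as [|f2]; [lia|]; cbn [Paux].
  f_equal; apply sum_eq; intros j Hj; f_equal; apply IH; lia.
Qed.

Lemma P_0 r b : P 0 r b = powerRZ (b 0%nat) r.
Proof. reflexivity. Qed.

Lemma P_rec n r b : P (S n) r b = / (INR (S n) * b 0%nat) *
  sum_f_R0 (fun j => (INR (S j) * (1 + IZR r) - INR (S n)) * b (S j) * P (S n - S j) r b) n.
Proof.
  unfold P at 1; cbn [Paux]; f_equal; apply sum_eq; intros j Hj.
  unfold P; f_equal; apply Paux_fuel; lia.
Qed.

Definition power_rel (r : Z) (b Q : nat -> R) : Prop :=
  forall n, IZR r * conv (Dv b) Q n = conv b (Dv Q) n.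

Lemma power_rel_step r b Q n :
  IZR r * conv (Dv b) Q (S n) - conv b (Dv Q) (S n) =
  sum_f_R0 (fun j => (INR (S j) * (1 + IZR r) - INR (S n)) * b (S j) * Q (S n - S j)%nat) n
  - INR (S n) * b 0%nat * Q (S n).
Proof.
  unfold conv, Dv; rewrite !(decomp_sum _ (S n)) by lia; cbn [pred].
  rewrite !Nat.sub_0_r, Rmult_plus_distr_l, scal_sum.
  replace (sum_f_R0 (fun j => (INR (S j) * (1 + IZR r) - INR (S n)) * b (S j) * Q (S n - S j)%nat) n)
    with (sum_f_R0 (fun i => INR (S i) * b (S i) * Q (S n - S i)%nat * IZR r) n -
          sum_f_R0 (fun i => b (S i) * (INR (S n - S i) * Q (S n - S i)%nat)) n)
    by (rewrite <- minus_sum; apply sum_eq; intros i Hi; rewrite minus_INR by lia; ring).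
  rewrite INR_0; ring.
Qed.

Lemma power_rel_P r b : b 0%nat <> 0 -> power_rel r b (fun k => P k r b).
Proof.
  intros Hb [|n]; [unfold conv, Dv; simpl; ring|].
  pose proof (power_rel_step r b (fun k => P k r b) n) as E; cbv beta in E.
  rewrite (P_rec n r b) in E.
  assert (INR (S n) <> 0) by (apply not_0_INR; lia).
  replace (INR (S n) * b 0%nat * (/ (INR (S n) * b 0%nat) *
      sum_f_R0 (fun j => (INR (S j) * (1 + IZR r) - INR (S n)) * b (S j) * P (S n - S j) r b) n))
    with (sum_f_R0 (fun j => (INR (S j) * (1 + IZR r) - INR (S n)) * b (S j) * P (S n - S j) r b) n)
    in E by (field; auto).
  lra.
Qed.

Lemma power_rel_unique r b Q Q' : b 0%nat <> 0 ->
  power_rel r b Q -> power_rel r b Q' -> Q 0%nat = Q' 0%nat -> forall n, Q n = Q' n.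
Proof.
  intros Hb H H' H0.
  enough (Hle : forall n k, (k <= n)%nat -> Q k = Q' k) by (intros n; apply (Hle n); lia).
  induction n as [|n IH]; intros k Hk; [now replace k with 0%nat by lia|].
  destruct (Nat.eq_dec k (S n)) as [->|]; [|apply IH; lia].
  pose proof (power_rel_step r b Q n) as E; rewrite (H (S n)) in E.
  pose proof (power_rel_step r b Q' n) as E'; rewrite (H' (S n)) in E'.
  rewrite (sum_eq _ (fun j => (INR (S j) * (1 + IZR r) - INR (S n)) * b (S j) * Q' (S n - S j)%nat))
    in E by (intros j Hj; rewrite (IH (S n - S j)%nat) by lia; reflexivity).
  assert (INR (S n) <> 0) by (apply not_0_INR; lia).
  apply (Rmult_eq_reg_l (INR (S n) * b 0%nat)); [lra|].
  now apply Rmult_integral_contrapositive.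
Qed.

Lemma P_exp0 b k : b 0%nat <> 0 -> P k 0 b = cst 1 k.
Proof.
  intros Hb; symmetry; apply (power_rel_unique 0 b (cst 1) (fun k => P k 0 b)); auto using power_rel_P.
  intros n; rewrite Rmult_0_l; unfold conv; rewrite sum_zero; auto.
  intros i _; unfold Dv; destruct (n - i)%nat; simpl; ring.
Qed.

Lemma P_exp1 b k : b 0%nat <> 0 -> P k 1 b = b k.
Proof.
  intros Hb; apply (power_rel_unique 1 b (fun k => P k 1 b) b); auto using power_rel_P.
  - intros n; rewrite Rmult_1_l; apply conv_comm.
  - rewrite P_0; simpl; ring.
Qed.

Lemma conv_P b r n : b 0%nat <> 0 -> conv b (fun k => P k r b) n = P n (r + 1) b.
Proof.
  intros Hb; revert n; set (Pr := fun k => P k r b).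
  apply (power_rel_unique (r + 1) b (conv b Pr) (fun n => P n (r + 1) b)); auto using power_rel_P.
  - intros n; rewrite plus_IZR.
    rewrite (conv_ext_r b (Dv (conv b Pr)) (fun k => (1 + IZR r) * conv (Dv b) Pr k))
      by (intros k _; rewrite Dv_conv; unfold Pr; rewrite <- (power_rel_P r b Hb k); ring).
    rewrite conv_scale_r, !conv_assoc.
    rewrite (conv_ext_l (conv b (Dv b)) (conv (Dv b) b)) by (intros; apply conv_comm); ring.
  - unfold conv, Pr; simpl sum_f_R0; rewrite !P_0, powerRZ_add by auto; simpl; ring.
Qed.

Definition rescale (s : R) (b : nat -> R) (k : nat) : R := s ^ k * b k.

Lemma conv_rescale s a c n : conv (rescale s a) (rescale s c) n = s ^ n * conv a c n.
Proof.
  unfold conv, rescale; rewrite scal_sum; apply sum_eq; intros i Hi.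
  replace (s ^ n) with (s ^ i * s ^ (n - i)) by (rewrite <- pow_add; f_equal; lia); ring.
Qed.

Lemma P_rescale s r b k : b 0%nat <> 0 -> P k r (rescale s b) = s ^ k * P k r b.
Proof.
  intros Hb; revert k.
  assert (Hb' : rescale s b 0%nat <> 0) by (unfold rescale; simpl; rewrite Rmult_1_l; auto).
  apply (power_rel_unique r (rescale s b) (fun k => P k r (rescale s b))
           (rescale s (fun k => P k r b))); auto using power_rel_P.
  - intros n.
    rewrite (conv_ext_l _ (rescale s (Dv b))) by (intros; unfold Dv, rescale; ring).
    rewrite (conv_ext_r (rescale s b) _ (rescale s (Dv (fun k => P k r b))))
      by (intros; unfold Dv, rescale; ring).
    rewrite !conv_rescale, <- (power_rel_P r b Hb n); ring.
  - unfold rescale; rewrite !P_0; simpl; now rewrite !Rmult_1_l.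
Qed.

Definition spread (c : nat -> R) (k : nat) : R := if Nat.even k then c (k / 2)%nat else 0.

Lemma even_double j : Nat.even (2 * j) = true.
Proof. apply Nat.even_spec; now exists j. Qed.

Lemma even_double1 j : Nat.even (2 * j + 1) = false.
Proof.
  rewrite <- Nat.negb_odd; replace (Nat.odd (2 * j + 1)) with true; [reflexivity|].
  symmetry; apply Nat.odd_spec; now exists j.
Qed.

Lemma div_double j : ((2 * j) / 2 = j)%nat.
Proof. rewrite Nat.mul_comm; apply Nat.div_mul; lia. Qed.

Lemma div_double1 j : ((2 * j + 1) / 2 = j)%nat.
Proof. pose proof (Nat.div_mod (2 * j + 1) 2); pose proof (Nat.mod_upper_bound (2 * j + 1) 2); lia. Qed.

Lemma spread_even c j : spread c (2 * j) = c j.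
Proof. unfold spread; now rewrite even_double, div_double. Qed.

Lemma spread_odd c j : spread c (2 * j + 1) = 0.
Proof. unfold spread; now rewrite even_double1. Qed.

Lemma poly_sum_spread c n z : poly_sum (spread c) (2 * n) z = poly_sum c n (z ^ 2).
Proof.
  induction n as [|n IH]; [reflexivity|].
  replace (2 * S n)%nat with (S (S (2 * n))) by lia.
  unfold poly_sum in *; rewrite tech5, tech5, (tech5 _ n), IH.
  replace (S (2 * n)) with (2 * n + 1)%nat by lia; rewrite spread_odd.
  replace (S (2 * n + 1)) with (2 * S n)%nat by lia; rewrite spread_even, <- pow_mult.
  replace (2 * S n)%nat with (S n * 2)%nat by lia; ring.
Qed.

Lemma pow_abs_le z j : Rabs z <= 1 -> Rabs z ^ (S j) <= Rabs z.
Proof.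
  intros H; induction j as [|j IH]; [simpl; lra|].
  pose proof (Rabs_pos z); pose proof (pow_le (Rabs z) (S j) H0).
  change (Rabs z ^ S (S j)) with (Rabs z * Rabs z ^ (S j)); nra.
Qed.

Lemma expands_square F e n :
  expands everywhere F e n -> expands everywhere (fun z => F (z ^ 2)) (spread e) (2 * n).
Proof.
  intros H eps Heps; destruct (H eps Heps) as [d [Hd Hz]].
  exists (Rmin 1 d); split; [apply Rmin_pos; lra|]; intros z _ z0 zd; cbv beta.
  apply Rmin_Rgt in zd as [z1 zd].
  rewrite poly_sum_spread.
  assert (Hz2 : Rabs (z ^ 2) < d)
    by (rewrite <- RPow_abs; pose proof (pow_abs_le z 1 (Rlt_le _ _ z1)); lra).
  specialize (Hz (z ^ 2) I (pow_nonzero z 2 z0) Hz2).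
  now rewrite <- RPow_abs, <- pow_mult in Hz.
Qed.

Lemma conv_spread a c L : conv (spread a) (spread c) L = spread (conv a c) L.
Proof.
  apply (expands_unique everywhere
           (fun z => poly_sum (spread a) (2 * L) z * poly_sum (spread c) (2 * L) z)
           _ _ (2 * L) dense0_everywhere); [apply expands_mul; apply expands_poly| |lia].
  eapply expands_congr;
    [|apply expands_square, expands_mul; [apply (expands_poly _ a L)|apply (expands_poly _ c L)]].
  intros z _; cbv beta; now rewrite !poly_sum_spread.
Qed.

Lemma Dv_spread c k : Dv (spread c) k = spread (fun j => 2 * Dv c j) k.
Proof.
  unfold Dv; destruct (Nat.Even_or_Odd k) as [[j ->]|[j ->]].
  - rewrite !spread_even, mult_INR; simpl (INR 2); ring.
  - rewrite !spread_odd; ring.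
Qed.

Lemma P_spread r b k : b 0%nat <> 0 -> P k r (spread b) = spread (fun j => P j r b) k.
Proof.
  intros Hb; revert k.
  apply (power_rel_unique r (spread b) (fun k => P k r (spread b))
           (spread (fun j => P j r b))); auto using power_rel_P.
  intros n.
  rewrite (conv_ext_l _ (spread (fun j => 2 * Dv b j))) by (intros; apply Dv_spread).
  rewrite (conv_ext_r (spread b) _ (spread (fun j => 2 * Dv (fun j => P j r b) j)))
    by (intros; apply Dv_spread).
  rewrite !conv_spread; destruct (Nat.Even_or_Odd n) as [[j ->]|[j ->]].
  - rewrite !spread_even, conv_scale_l, conv_scale_r, <- (power_rel_P r b Hb j); ring.
  - rewrite !spread_odd; ring.
Qed.

Lemma expands_nonzero dom f b n : expands dom f b n -> b 0%nat <> 0 ->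
  near0 dom (fun z => f z <> 0).
Proof.
  intros Hf Hb; eapply near0_impl; [|exact (tends_away _ _ _ Hb (expands_tends _ _ _ _ Hf))].
  intros z _ _ Hz E; cbv beta in Hz; rewrite E, Rabs_R0 in Hz.
  pose proof (Rabs_pos_lt _ Hb); lra.
Qed.

Lemma expands_pow_nat dom f b n k : expands dom f b n -> b 0%nat <> 0 ->
  expands dom (fun z => powerRZ (f z) (Z.of_nat k)) (fun j => P j (Z.of_nat k) b) n.
Proof.
  intros Hf Hb; induction k as [|k IH].
  - apply (expands_coef_congr _ _ (cst 1)); [intros j _; now rewrite P_exp0|].
    exact (expands_const dom 1 n).
  - eapply expands_coef_congr; [|eapply expands_congr; [|exact (expands_mul _ _ _ _ _ _ Hf IH)]].
    + intros j _; rewrite conv_P by auto; f_equal; lia.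
    + intros z _; cbv beta; now rewrite <- !pow_powerRZ.
Qed.

(** Negative powers are obtained by repeated division by [f]. *)
Lemma expands_pow_neg dom f b n k : expands dom f b n -> b 0%nat <> 0 ->
  expands dom (fun z => powerRZ (f z) (- Z.of_nat k)) (fun j => P j (- Z.of_nat k) b) n.
Proof.
  intros Hf Hb; induction k as [|k IH]; [exact (expands_pow_nat _ _ _ _ 0 Hf Hb)|].
  apply (expands_div dom f _ b _ n Hf Hb).
  eapply expands_coef_congr; [|eapply expands_congr_near; [|exact IH]].
  - intros j _; rewrite conv_P by auto; f_equal; lia.
  - eapply near0_impl; [|exact (expands_nonzero _ _ _ _ Hf Hb)]; intros z _ _ Hz; cbv beta.
    replace (- Z.of_nat k)%Z with (1 + - Z.of_nat (S k))%Z by lia.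
    rewrite powerRZ_add by auto; simpl; ring.
Qed.

Lemma expands_pow dom f b n r : expands dom f b n -> b 0%nat <> 0 ->
  expands dom (fun z => powerRZ (f z) r) (fun k => P k r b) n.
Proof.
  intros Hf Hb; destruct r as [|p|p].
  - exact (expands_pow_nat _ _ _ _ 0 Hf Hb).
  - rewrite <- positive_nat_Z; exact (expands_pow_nat _ _ _ _ _ Hf Hb).
  - replace (Z.neg p) with (- Z.of_nat (Pos.to_nat p))%Z by (rewrite positive_nat_Z; reflexivity).
    exact (expands_pow_neg _ _ _ _ _ Hf Hb).
Qed.

(** ** Means near the diagonal *)

Definition profile (X : R -> R -> R) (z : R) : R := X (1 - z) (1 + z).

Definition posz (z : R) : Prop := 0 < z.

Lemma dense0_posz : dense0 posz.
Proof. intros d Hd; exists (d / 2); unfold posz; repeat split; [lra|lra|rewrite Rabs_pos_eq; lra]. Qed.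

Lemma mean_diag X : is_mean X -> X 1 1 = 1.
Proof.
  intros Hm; destruct (Hm 1 1) as [H1 H2]; try lra.
  rewrite Rmin_left in H1 by lra; rewrite Rmax_left in H2 by lra; lra.
Qed.

Lemma mean_pos X p q : is_mean X -> 0 < p -> 0 < q -> 0 < X p q.
Proof.
  intros Hm Hp Hq; destruct (Hm p q Hp Hq) as [H _].
  eapply Rlt_le_trans; [|exact H]; unfold Rmin; destruct (Rle_dec p q); lra.
Qed.

Lemma profile_bounds X z : is_mean X -> 0 < z < 1 -> 1 - z <= profile X z <= 1 + z.
Proof.
  intros Hm Hz; unfold profile; destruct (Hm (1 - z) (1 + z)) as [H1 H2]; try lra.
  rewrite Rmin_left in H1 by lra; rewrite Rmax_right in H2 by lra; lra.
Qed.

Lemma powerRZ_1m2 x j : x <> 0 -> powerRZ x (1 - 2 * Z.of_nat j) = x / x ^ (2 * j).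
Proof.
  intros Hx; replace (1 - 2 * Z.of_nat j)%Z with (1 + - Z.of_nat (2 * j))%Z by lia.
  rewrite powerRZ_add, powerRZ_neg', <- pow_powerRZ by auto; simpl; unfold Rdiv; ring.
Qed.

Lemma powerRZ_2j x j : powerRZ x (2 * Z.of_nat j) = x ^ (2 * j).
Proof. rewrite pow_powerRZ; f_equal; lia. Qed.

(** By homogeneity, the normalised remainder of the expansion at [x = 1/w] of
    [X(x-1, x+1)] is the normalised remainder of the profile at [w]. *)
Lemma remainder_at_inverse X a N w : is_homogeneous X -> 0 < w < 1 ->
  (X (/ w - 1) (/ w + 1)
   - sum_f_R0 (fun n => a n * 1 ^ (2 * n) * powerRZ (/ w) (1 - 2 * Z.of_nat n)) N)
  / powerRZ (/ w) (1 - 2 * Z.of_nat N)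
  = (profile X w - poly_sum a N (w ^ 2)) / w ^ (2 * N).
Proof.
  intros Hh Hw.
  assert (Hw0 : w <> 0) by lra; assert (Hp : w ^ (2 * N) <> 0) by now apply pow_nonzero.
  replace (/ w - 1) with (/ w * (1 - w)) by (field; lra).
  replace (/ w + 1) with (/ w * (1 + w)) by (field; lra).
  rewrite Hh by (try apply Rinv_0_lt_compat; lra).
  rewrite (sum_eq _ (fun n => a n * (w ^ 2) ^ n * / w)), <- scal_sum.
  - rewrite powerRZ_1m2, pow_inv by now apply Rinv_neq_0_compat.
    unfold profile, poly_sum; field; auto.
  - intros n _; rewrite pow1, powerRZ_1m2, pow_inv, <- pow_mult by now apply Rinv_neq_0_compat.
    field; split; auto; now apply pow_nonzero.
Qed.

Lemma expands_profile X a N : is_homogeneous X -> has_sym_asymp_exp X a ->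
  expands posz (profile X) (spread a) (2 * N).
Proof.
  intros Hh Ha eps Heps.
  destruct (proj2 (is_lim_spec _ _ _) (Ha 1 N) (mkposreal eps Heps)) as [M HM].
  pose proof (Rmax_l M 1); pose proof (Rmax_r M 1).
  exists (/ (Rmax M 1 + 1)); split; [apply Rinv_0_lt_compat; lra|].
  intros w Hw _ Hwd; unfold posz in Hw; rewrite Rabs_pos_eq in Hwd by lra; cbv beta.
  assert (Hx : Rmax M 1 + 1 < / w).
  { rewrite <- (Rinv_inv (Rmax M 1 + 1)); apply Rinv_lt_contravar; auto.
    apply Rmult_lt_0_compat; auto; apply Rinv_0_lt_compat; lra. }
  assert (Hw1 : w < 1) by (rewrite <- (Rinv_inv w), <- Rinv_1; apply Rinv_lt_contravar; lra).
  specialize (HM (/ w) ltac:(lra)); cbv beta in HM; cbn [pos] in HM.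
  rewrite remainder_at_inverse, Rminus_0_r in HM by (auto; lra).
  rewrite poly_sum_spread, (Rabs_pos_eq w) by lra.
  assert (Hp : 0 < w ^ (2 * N)) by (apply pow_lt; lra).
  unfold Rdiv in HM; rewrite Rabs_mult, Rabs_inv, (Rabs_pos_eq (w ^ (2 * N))) in HM by lra.
  apply Rlt_le, (Rmult_lt_reg_r (/ w ^ (2 * N))); [now apply Rinv_0_lt_compat|].
  rewrite Rmult_assoc, Rinv_r, Rmult_1_r by lra; exact HM.
Qed.

Lemma coef0_one X a : is_mean X -> is_homogeneous X -> has_sym_asymp_exp X a -> a 0%nat = 1.
Proof.
  intros Hm Hh Ha.
  apply (tends_unique posz (profile X)); [apply dense0_posz| |].
  - exact (expands_tends _ _ _ _ (expands_profile X a 0 Hh Ha)).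
  - intros eps Heps; eapply near0_impl; [|exact (near0_lt posz (Rmin eps 1) ltac:(apply Rmin_pos; lra))].
    intros z Hz _ Hzd; cbv beta in Hzd; unfold posz in Hz; rewrite Rabs_pos_eq in Hzd by lra.
    apply Rmin_Rgt in Hzd as [Hze Hz1]; cbv beta.
    pose proof (profile_bounds X z Hm ltac:(lra)); apply Rabs_le; lra.
Qed.

Lemma poly_sum_at0 c n : poly_sum c n 0 = c 0%nat.
Proof.
  unfold poly_sum; rewrite (sum_single _ n 0); [simpl; ring|lia|].
  intros [|i] _ Hi; [lia|simpl; ring].
Qed.

Lemma profile_remainder_small X a N eps :
  is_mean X -> is_homogeneous X -> has_sym_asymp_exp X a -> 0 < eps ->
  exists d, 0 < d /\ forall w, 0 <= w < d ->
    Rabs (profile X w - poly_sum a N (w ^ 2)) <= eps * w ^ (2 * N).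
Proof.
  intros Hm Hh Ha Heps.
  destruct (expands_profile X a N Hh Ha eps Heps) as [d [Hd Hw]].
  exists d; split; auto; intros w [[Hw0|<-] Hwd].
  - specialize (Hw w Hw0 (Rgt_not_eq _ _ Hw0) ltac:(rewrite Rabs_pos_eq; lra)); cbv beta in Hw.
    now rewrite poly_sum_spread, (Rabs_pos_eq w) in Hw by lra.
  - unfold profile; rewrite pow_i, poly_sum_at0, (coef0_one X a), Rminus_0_r, Rplus_0_r,
      mean_diag, Rminus_diag, Rabs_R0 by (auto; lia).
    apply Rmult_le_pos; [lra|apply pow_le; lra].
Qed.

Lemma mean_offset X a N u v : is_symmetric X -> is_homogeneous X -> Rabs v < u ->
  X (u - v) (u + v) - sum_f_R0 (fun j => a j * v ^ (2 * j) * powerRZ u (1 - 2 * Z.of_nat j)) N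
  = u * (profile X (Rabs v / u) - poly_sum a N ((Rabs v / u) ^ 2)).
Proof.
  intros Hs Hh Hvu; pose proof (Rabs_pos v) as Hv0; assert (Hu : 0 < u) by lra.
  assert (Hw : Rabs v / u < 1)
    by (apply (Rmult_lt_reg_r u); [lra|]; unfold Rdiv; rewrite Rmult_assoc, Rinv_l; lra).
  assert (Hw0 : 0 <= Rabs v / u) by (apply Rdiv_le_0_compat; lra).
  assert (EX : X (u - v) (u + v) = u * profile X (Rabs v / u)).
  { unfold profile; rewrite <- Hh by lra.
    destruct (Rle_or_lt 0 v) as [hv|hv].
    - rewrite Rabs_pos_eq by auto; f_equal; field; lra.
    - rewrite Rabs_left in * by lra; rewrite Hs by lra; f_equal; field; lra. }
  assert (ES : sum_f_R0 (fun j => a j * v ^ (2 * j) * powerRZ u (1 - 2 * Z.of_nat j)) N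
               = u * poly_sum a N ((Rabs v / u) ^ 2)).
  { unfold poly_sum; rewrite scal_sum; apply sum_eq; intros j _.
    rewrite powerRZ_1m2 by lra; unfold Rdiv.
    rewrite Rpow_mult_distr, pow2_abs, pow_inv, Rpow_mult_distr, pow_inv, <- !pow_mult.
    field; apply pow_nonzero; lra. }
  rewrite EX, ES; ring.
Qed.

Lemma poly_sum_zero n z : poly_sum (fun _ => 0) n z = 0.
Proof. unfold poly_sum; apply sum_zero; intros; ring. Qed.

Lemma expands_mean_offset dom X a u v C ulo uhi N :
  is_mean X -> is_symmetric X -> is_homogeneous X -> has_sym_asymp_exp X a ->
  0 < ulo -> 0 <= C ->
  near0 dom (fun z => Rabs (v z) < u z /\ Rabs (v z) <= C * Rabs z /\ ulo <= u z <= uhi) ->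
  expands dom (fun z => X (u z - v z) (u z + v z)
     - sum_f_R0 (fun j => a j * v z ^ (2 * j) * powerRZ (u z) (1 - 2 * Z.of_nat j)) N)
    (fun _ => 0) (2 * N).
Proof.
  intros Hm Hs Hh Ha Hulo HC Huv eps Heps.
  set (L := (C / ulo) ^ (2 * N)).
  assert (HL : 0 <= L) by (apply pow_le, Rdiv_le_0_compat; lra).
  set (e := eps / (Rabs uhi * L + 1)).
  assert (He : 0 < e) by (pose proof (Rabs_pos uhi); apply Rdiv_lt_0_compat; nra).
  assert (Ee : e * (Rabs uhi * L + 1) = eps) by (unfold e; field; pose proof (Rabs_pos uhi); nra).
  destruct (profile_remainder_small X a N e Hm Hh Ha He) as [d [Hd Hw]].
  assert (Hdz : 0 < d * ulo / (C + 1)) by (apply Rdiv_lt_0_compat; nra).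
  eapply near0_impl; [|exact (near0_and _ _ _ Huv (near0_lt dom _ Hdz))].
  intros z _ _ [[Hvu [HvC [Hlo Hhi]]] Hzd]; cbv beta.
  rewrite mean_offset, poly_sum_zero, Rminus_0_r, Rabs_mult, (Rabs_pos_eq (u z)) by (auto; lra).
  set (w := Rabs (v z) / u z).
  assert (HwC : w <= C / ulo * Rabs z).
  { apply Rle_trans with (Rabs (v z) / ulo); unfold w, Rdiv.
    - apply Rmult_le_compat_l; [apply Rabs_pos|apply Rinv_le_contravar; lra].
    - apply Rle_trans with (C * Rabs z * / ulo); [|right; ring].
      apply Rmult_le_compat_r; [left; apply Rinv_0_lt_compat|]; lra. }
  assert (Hw0 : 0 <= w) by (apply Rdiv_le_0_compat; [apply Rabs_pos|lra]).
  assert (Hwd : w < d).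
  { assert (E : C / ulo * (d * ulo / (C + 1)) = d - d / (C + 1)) by (field; lra).
    assert (0 < d / (C + 1)) by (apply Rdiv_lt_0_compat; lra).
    assert (C / ulo * Rabs z <= C / ulo * (d * ulo / (C + 1)))
      by (apply Rmult_le_compat_l; [apply Rdiv_le_0_compat|]; lra).
    lra. }
  assert (Hwp : w ^ (2 * N) <= L * Rabs z ^ (2 * N))
    by (unfold L; rewrite <- Rpow_mult_distr; apply pow_incr; lra).
  specialize (Hw w (conj Hw0 Hwd)).
  set (E := Rabs (profile X w - poly_sum a N (w ^ 2))) in *.
  set (Z := Rabs z ^ (2 * N)) in *.
  assert (0 <= E) by apply Rabs_pos; assert (0 <= Z) by apply pow_le, Rabs_pos.
  assert (HE : E <= e * L * Z) by (rewrite Rmult_assoc; eapply Rle_trans; [exact Hw|];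
                                   apply Rmult_le_compat_l; lra).
  apply Rle_trans with (Rabs uhi * (e * L * Z)).
  - apply Rmult_le_compat; try lra; pose proof (Rle_abs uhi); lra.
  - rewrite <- Ee; assert (0 <= e * Z) by (apply Rmult_le_pos; lra); nra.
Qed.

(** Coefficients of [z^(2j) B(z)^(2j) C(z)^(1-2j)], where [B], [C] have coefficients [b], [c]. *)
Definition pair_coef (b c : nat -> R) (j L : nat) : R :=
  conv (delta (2 * j))
       (conv (fun k => P k (2 * Z.of_nat j) b) (fun k => P k (1 - 2 * Z.of_nat j) c)) L.

Lemma expands_pair dom B C b c j n :
  expands dom B b n -> b 0%nat <> 0 -> expands dom C c n -> c 0%nat <> 0 ->
  expands dom (fun z => (z * B z) ^ (2 * j) * powerRZ (C z) (1 - 2 * Z.of_nat j))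
    (pair_coef b c j) n.
Proof.
  intros HB Hb HC Hc.
  eapply expands_congr; [|exact (expands_mul _ _ _ _ _ _ (expands_monomial dom (2 * j) n)
    (expands_mul _ _ _ _ _ _ (expands_pow _ _ _ _ _ HB Hb) (expands_pow _ _ _ _ _ HC Hc)))].
  intros z _; cbv beta; rewrite powerRZ_2j, Rpow_mult_distr; ring.
Qed.

Lemma expands_mean_series dom X a u v C ulo uhi J n (t : nat -> nat -> R) :
  is_mean X -> is_symmetric X -> is_homogeneous X -> has_sym_asymp_exp X a ->
  0 < ulo -> 0 <= C -> (n <= 2 * J)%nat ->
  near0 dom (fun z => Rabs (v z) < u z /\ Rabs (v z) <= C * Rabs z /\ ulo <= u z <= uhi) ->
  (forall j, (j <= J)%nat ->
     expands dom (fun z => v z ^ (2 * j) * powerRZ (u z) (1 - 2 * Z.of_nat j)) (t j) n) ->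
  expands dom (fun z => X (u z - v z) (u z + v z)) (fun L => sum_f_R0 (fun j => a j * t j L) J) n.
Proof.
  intros Hm Hs Hh Ha Hulo HC Hn Huv Ht.
  pose proof (expands_le _ _ _ _ _ Hn
    (expands_mean_offset dom X a u v C ulo uhi J Hm Hs Hh Ha Hulo HC Huv)) as Hrem.
  pose proof (expands_sum dom
    (fun j z => a j * (v z ^ (2 * j) * powerRZ (u z) (1 - 2 * Z.of_nat j)))
    (fun j L => a j * t j L) J n (fun j Hj => expands_scale _ _ _ (a j) _ (Ht j Hj))) as Hser.
  eapply expands_coef_congr; [|eapply expands_congr; [|exact (expands_add _ _ _ _ _ _ Hrem Hser)]].
  - intros k _; cbv beta; ring.
  - intros z _; cbv beta.
    replace (sum_f_R0 (fun j => a j * (v z ^ (2 * j) * powerRZ (u z) (1 - 2 * Z.of_nat j))) J)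
      with (sum_f_R0 (fun j => a j * v z ^ (2 * j) * powerRZ (u z) (1 - 2 * Z.of_nat j)) J)
      by (apply sum_eq; intros; ring); ring.
Qed.

Lemma expands_profile_le X a n : is_homogeneous X -> has_sym_asymp_exp X a ->
  expands posz (profile X) (spread a) n.
Proof. intros Hh Ha; apply (expands_le _ _ _ _ (2 * n)); [lia|]; now apply expands_profile. Qed.

Lemma pow_sign_even s i : s * s = 1 -> s ^ (2 * i) = 1.
Proof. intros Hs; rewrite pow_mult; simpl; rewrite Rmult_1_r, Hs; apply pow1. Qed.

Lemma pow_sign_odd s i : s * s = 1 -> s ^ (2 * i + 1) = s.
Proof. intros Hs; rewrite pow_add, pow_sign_even by auto; simpl; ring. Qed.

(** [1 + s (m(z) - 1)/z] has coefficients [g^M] rescaled by [s]. *)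
Lemma gseq_rescale s aM k : s * s = 1 -> aM 0%nat = 1 ->
  cst 1 k + s * tail (spread aM) k = rescale s (gseq aM) k.
Proof.
  intros Hs Ha; unfold rescale, tail; destruct k as [|k]; [unfold spread; simpl; ring|].
  unfold cst, gseq; rewrite Nat.odd_succ; unfold spread; simpl Nat.even at 1.
  destruct (Nat.Even_or_Odd k) as [[i ->]|[i ->]].
  - rewrite even_double; replace (S (2 * i)) with (2 * i + 1)%nat by lia.
    rewrite pow_sign_odd by auto; ring.
  - rewrite even_double1; ring.
Qed.

(** [1 - s z + m(z)] has coefficients [h^M] rescaled by [s]. *)
Lemma hseq_rescale s aM k : s * s = 1 -> aM 0%nat = 1 ->
  cst 1 k + - s * delta 1 k + spread aM k = rescale s (hseq aM) k.
Proof.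
  intros Hs Ha; unfold rescale, cst, delta, hseq; destruct k as [|[|k]].
  - unfold spread; simpl; rewrite Ha; ring.
  - unfold spread; simpl; ring.
  - simpl Nat.eqb; cbv iota; unfold spread.
    destruct (Nat.Even_or_Odd k) as [[i ->]|[i ->]].
    + replace (S (S (2 * i))) with (2 * S i)%nat by lia.
      rewrite even_double, pow_sign_even by auto; ring.
    + replace (S (S (2 * i + 1))) with (2 * S i + 1)%nat by lia; rewrite even_double1; ring.
Qed.

Lemma pair_coef_high b c j L : (L < 2 * j)%nat -> pair_coef b c j L = 0.
Proof.
  intros HL; unfold pair_coef; rewrite conv_delta.
  now replace (Nat.leb (2 * j) L) with false by (symmetry; apply Nat.leb_gt; lia).
Qed.

Lemma pair_coef_rescale s b c j L : s * s = 1 -> b 0%nat <> 0 -> c 0%nat <> 0 ->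
  pair_coef (rescale s b) (rescale s c) j L = s ^ L * pair_coef b c j L.
Proof.
  intros Hs Hb Hc; unfold pair_coef; rewrite !conv_delta.
  destruct (Nat.leb (2 * j) L) eqn:E; [apply Nat.leb_le in E|ring].
  rewrite (conv_ext_l _ (rescale s (fun k => P k (2 * Z.of_nat j) b)))
    by (intros; now apply P_rescale).
  rewrite (conv_ext_r _ _ (rescale s (fun k => P k (1 - 2 * Z.of_nat j) c)))
    by (intros; now apply P_rescale).
  rewrite conv_rescale.
  replace (s ^ L) with (s ^ (2 * j) * s ^ (L - 2 * j)) by (rewrite <- pow_add; f_equal; lia).
  rewrite pow_sign_even by auto; ring.
Qed.

Lemma pair_coef_spread b c j m : b 0%nat <> 0 -> c 0%nat <> 0 -> (j <= m)%nat ->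
  pair_coef (spread b) (spread c) j (2 * m)
  = conv (fun k => P k (2 * Z.of_nat j) b) (fun k => P k (1 - 2 * Z.of_nat j) c) (m - j).
Proof.
  intros Hb Hc Hj; unfold pair_coef; rewrite conv_delta.
  replace (Nat.leb (2 * j) (2 * m)) with true by (symmetry; apply Nat.leb_le; lia).
  rewrite (conv_ext_l _ (spread (fun k => P k (2 * Z.of_nat j) b))) by (intros; now apply P_spread).
  rewrite (conv_ext_r _ _ (spread (fun k => P k (1 - 2 * Z.of_nat j) c)))
    by (intros; now apply P_spread).
  rewrite conv_spread; replace (2 * m - 2 * j)%nat with (2 * (m - j))%nat by lia.
  apply spread_even.
Qed.

Lemma div2_bounds L : (2 * (L / 2) <= L /\ L < 2 * (L / 2) + 2)%nat.
Proof. pose proof (Nat.div_mod L 2); pose proof (Nat.mod_upper_bound L 2); lia. Qed.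

Lemma pair_series_inner aM aN Om L : (L <= Om)%nat ->
  sum_f_R0 (fun j => aN j * (/ 2 * pair_coef (gseq aM) (hseq aM) j L)) Om
  = / 2 * inner aM aN (L / 2) L.
Proof.
  intros HL; pose proof (div2_bounds L).
  rewrite (sum_trunc _ Om (L / 2)) by (try lia; intros j Hj; rewrite pair_coef_high; lia || ring).
  unfold inner; rewrite scal_sum; apply sum_eq; intros j Hj.
  unfold pair_coef; rewrite conv_delta.
  replace (Nat.leb (2 * j) L) with true by (symmetry; apply Nat.leb_le; lia).
  unfold conv; ring.
Qed.

Lemma sseq_0 aM aN : aN 0%nat = 1 -> sseq aM aN 0 = 1.
Proof. intros H; unfold sseq, inner; simpl; rewrite H; unfold P; simpl; field. Qed.

Lemma dseq_0 aM aN : aN 0%nat = 1 -> dseq aM aN 0 = / 2.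
Proof.
  intros H; unfold dseq, inner; simpl sum_f_R0; rewrite H.
  replace (2 * 0 + 1 - 2 * 0)%nat with 1%nat by lia; simpl sum_f_R0.
  rewrite !P_exp0 by (unfold gseq; lra); rewrite !P_exp1 by (unfold hseq; lra).
  simpl; field.
Qed.

Definition recurrence_rhs (aM aN aK : nat -> R) (m : nat) : R :=
  2 ^ (2 * m) / (2 ^ (2 * m) - 1) *
    ( / 2 * inner aM aN (m - 1) (2 * m)
      + sum_f_R0 (fun j => aK (S j) *
          sum_f_R0 (fun k => P k (2 * Z.of_nat (S j))%Z (dseq aM aN)
                      * P (m - S j - k) (1 - 2 * Z.of_nat (S j))%Z (sseq aM aN))
                   (m - S j)) (m - 1)).

(** The [j = 0] term of the [K]-series is [s_m]; the others form the double sum. *)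
Lemma pair_series_split aM aN aK m : (1 <= m)%nat -> aK 0%nat = 1 -> aN 0%nat = 1 ->
  sum_f_R0 (fun j => aK j * pair_coef (spread (dseq aM aN)) (spread (sseq aM aN)) j (2 * m)) m
  = sseq aM aN m + sum_f_R0 (fun j => aK (S j) *
      sum_f_R0 (fun k => P k (2 * Z.of_nat (S j))%Z (dseq aM aN)
                  * P (m - S j - k) (1 - 2 * Z.of_nat (S j))%Z (sseq aM aN)) (m - S j)) (m - 1).
Proof.
  intros Hm HK0 HN0.
  assert (Hd : dseq aM aN 0 <> 0) by (rewrite dseq_0 by auto; lra).
  assert (Hs : sseq aM aN 0 <> 0) by (rewrite sseq_0 by auto; lra).
  rewrite decomp_sum by lia; replace (pred m) with (m - 1)%nat by lia; f_equal.
  - rewrite HK0, Rmult_1_l, pair_coef_spread by (auto; lia).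
    rewrite (conv_ext_l _ (delta 0))
      by (intros k _; change (2 * Z.of_nat 0)%Z with 0%Z; rewrite P_exp0 by auto; now destruct k).
    rewrite (conv_ext_r _ _ (sseq aM aN)) by (intros; now apply P_exp1).
    rewrite conv_delta; simpl; f_equal; lia.
  - apply sum_eq; intros i Hi; rewrite pair_coef_spread by (auto; lia); reflexivity.
Qed.

(** [s_(m+1)] contains [a^N_(m+1)] through its [n = m+1] term, with weight [2^-(2m+2)]. *)
Lemma sseq_split aM aN m :
  sseq aM aN (S m) = / 2 * inner aM aN m (2 * S m) + aN (S m) * / 2 ^ (2 * S m).
Proof.
  unfold sseq; unfold inner at 1; rewrite tech5; fold (inner aM aN m (2 * S m)).
  rewrite Nat.sub_diag; cbn [sum_f_R0]; rewrite Nat.sub_diag, !P_0.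
  change (gseq aM 0%nat) with 1; change (hseq aM 0%nat) with 2.
  rewrite powerRZ_R1, powerRZ_1m2 by lra; field; apply pow_nonzero; lra.
Qed.

Lemma recurrence_rhs_1 aM aN aK : aN 0%nat = 1 ->
  recurrence_rhs aM aN aK 1 = / 3 * (aK 1%nat + 2 * aM 1%nat).
Proof.
  intros HN0; unfold recurrence_rhs; simpl (1 - 1)%nat; simpl (2 * 1)%nat.
  unfold inner at 1; simpl sum_f_R0.
  rewrite !P_exp0 by (unfold gseq; lra); rewrite P_exp1 by (unfold hseq; lra).
  rewrite !P_0, dseq_0, sseq_0 by auto; unfold cst; rewrite HN0; unfold hseq; simpl; field.
Qed.

Section Stabilization.

Variables (M N K : R -> R -> R) (aM aN aK : nat -> R).
Hypotheses (HmM : is_mean M) (HhM : is_homogeneous M) (HaM : has_sym_asymp_exp M aM).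
Hypotheses (HmN : is_mean N) (HsN : is_symmetric N) (HhN : is_homogeneous N)
  (HaN : has_sym_asymp_exp N aN).
Hypotheses (HmK : is_mean K) (HsK : is_symmetric K) (HhK : is_homogeneous K)
  (HaK : has_sym_asymp_exp K aK).
Hypothesis Hst : is_stabilizable K M N.

(** For a sign [s], the inner arguments [N(1 - s z, m(z))] of [K] with [m = profile M];
    writing [1 - s z = u - v] and [m(z) = u + v] gives [u = H/2] and [v = s z G/2]. *)
Definition Afun (s z : R) : R := N (1 - s * z) (profile M z).
Definition gfun (s z : R) : R := 1 + s * ((profile M z - 1) / z).
Definition hfun (s z : R) : R := 1 - s * z + profile M z.

Lemma expands_gfun s n : s * s = 1 -> expands posz (gfun s) (rescale s (gseq aM)) n.
Proof.
  intros Hs; pose proof (coef0_one M aM HmM HhM HaM) as HM0.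
  pose proof (proj1 (expands_tail _ _ _ n) (expands_profile_le M aM (S n) HhM HaM)) as Ht.
  eapply expands_coef_congr; [|eapply expands_congr;
    [|exact (expands_add _ _ _ _ _ _ (expands_const posz 1 n) (expands_scale _ _ _ s _ Ht))]].
  - intros k _; now apply gseq_rescale.
  - intros z _; unfold gfun; cbv beta; change (spread aM 0%nat) with (aM 0%nat); now rewrite HM0.
Qed.

Lemma expands_hfun s n : s * s = 1 -> expands posz (hfun s) (rescale s (hseq aM)) n.
Proof.
  intros Hs; pose proof (coef0_one M aM HmM HhM HaM) as HM0.
  eapply expands_coef_congr; [|eapply expands_congr; [|exact (expands_add _ _ _ _ _ _
    (expands_add _ _ _ _ _ _ (expands_const posz 1 n)
       (expands_scale _ _ _ (- s) _ (expands_monomial posz 1 n)))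
    (expands_profile_le M aM n HhM HaM))]].
  - intros k _; now apply hseq_rescale.
  - intros z _; unfold hfun; cbv beta; ring.
Qed.

Lemma Afun_term s z j : s * s = 1 -> z <> 0 -> 0 < hfun s z ->
  ((profile M z - 1 + s * z) / 2) ^ (2 * j) * powerRZ (hfun s z / 2) (1 - 2 * Z.of_nat j)
  = / 2 * ((z * gfun s z) ^ (2 * j) * powerRZ (hfun s z) (1 - 2 * Z.of_nat j)).
Proof.
  intros Hs Hz Hh.
  assert (Ev : s * (z * gfun s z) = s * z + s * s * (profile M z - 1))
    by (unfold gfun; field; auto).
  replace ((profile M z - 1 + s * z) / 2) with (s * (z * gfun s z) / 2)
    by (rewrite Ev, Hs; field).
  rewrite !powerRZ_1m2 by lra; unfold Rdiv.
  rewrite !Rpow_mult_distr, !pow_inv, pow_sign_even by auto.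
  field; split; apply pow_nonzero; lra.
Qed.

Lemma expands_Afun s Om : s * s = 1 ->
  expands posz (Afun s) (fun L => s ^ L * (/ 2 * inner aM aN (L / 2) L)) Om.
Proof.
  intros Hs; assert (Hsg : s = 1 \/ s = -1) by (destruct (Rle_or_lt 0 s); [left|right]; nra).
  assert (Hg0 : rescale s (gseq aM) 0%nat <> 0) by (unfold rescale, gseq; simpl; lra).
  assert (Hh0 : rescale s (hseq aM) 0%nat <> 0) by (unfold rescale, hseq; simpl; lra).
  set (u := fun z => hfun s z / 2); set (v := fun z => (profile M z - 1 + s * z) / 2).
  assert (Huv : near0 posz (fun z =>
    Rabs (v z) < u z /\ Rabs (v z) <= 1 * Rabs z /\ 1 / 2 <= u z <= 2)).
  { eapply near0_impl; [|exact (near0_lt posz (1 / 2) ltac:(lra))].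
    intros z Hz _ Hzd; cbv beta in *; unfold posz in Hz.
    rewrite Rabs_pos_eq in Hzd by lra; rewrite (Rabs_pos_eq z) by lra.
    pose proof (profile_bounds M z HmM ltac:(lra)); unfold u, v, hfun.
    destruct Hsg; subst s; repeat split; try apply Rabs_def1; try apply Rabs_le; lra. }
  assert (Hterm : forall j, (j <= Om)%nat ->
    expands posz (fun z => v z ^ (2 * j) * powerRZ (u z) (1 - 2 * Z.of_nat j))
      (fun L => / 2 * pair_coef (rescale s (gseq aM)) (rescale s (hseq aM)) j L) Om).
  { intros j _; eapply expands_congr_near; [|exact (expands_scale _ _ _ (/ 2) _
      (expands_pair _ _ _ _ _ j _ (expands_gfun s Om Hs) Hg0 (expands_hfun s Om Hs) Hh0))].
    eapply near0_impl; [|exact (near0_lt posz (1 / 2) ltac:(lra))].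
    intros z Hz z0 Hzd; cbv beta in *; unfold posz in Hz; rewrite Rabs_pos_eq in Hzd by lra.
    pose proof (profile_bounds M z HmM ltac:(lra)); unfold u, v.
    rewrite Afun_term; auto; unfold hfun; destruct Hsg; subst s; lra. }
  eapply expands_coef_congr; [|eapply expands_congr; [|exact (expands_mean_series posz N aN u v
    1 (1 / 2) 2 Om Om _ HmN HsN HhN HaN ltac:(lra) ltac:(lra) ltac:(lia) Huv Hterm)]].
  - intros L HL; rewrite <- (pair_series_inner aM aN Om L HL), scal_sum; apply sum_eq; intros j _.
    rewrite pair_coef_rescale by (auto; unfold gseq, hseq; lra); ring.
  - intros z _; unfold Afun, u, v, hfun; f_equal; field.
Qed.

Definition Ufun (z : R) : R := (Afun 1 z + Afun (-1) z) / 2.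
Definition Vfun (z : R) : R := (Afun (-1) z - Afun 1 z) / 2.

Lemma expands_Ufun n : expands posz Ufun (spread (sseq aM aN)) n.
Proof.
  pose proof (expands_scale _ _ _ (/ 2) _ (expands_add _ _ _ _ _ _
    (expands_Afun 1 n ltac:(ring)) (expands_Afun (-1) n ltac:(ring)))) as H.
  eapply expands_coef_congr; [|eapply expands_congr; [|exact H]].
  - intros L _; cbv beta; rewrite pow1; destruct (Nat.Even_or_Odd L) as [[i ->]|[i ->]].
    + rewrite spread_even, div_double, pow_sign_even by ring; unfold sseq; field.
    + rewrite spread_odd, pow_sign_odd by ring; field.
  - intros z _; unfold Ufun; field.
Qed.

Lemma expands_Vfun_div n : expands posz (fun z => Vfun z / z) (spread (dseq aM aN)) n.
Proof.
  pose proof (expands_scale _ _ _ (/ 2) _ (expands_add _ _ _ _ _ _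
    (expands_Afun (-1) (S n) ltac:(ring))
    (expands_scale _ _ _ (-1) _ (expands_Afun 1 (S n) ltac:(ring))))) as H.
  apply expands_tail in H.
  eapply expands_coef_congr; [|eapply expands_congr; [|exact H]].
  - intros L _; unfold tail; cbv beta; rewrite pow1.
    destruct (Nat.Even_or_Odd L) as [[i ->]|[i ->]].
    + rewrite spread_even; replace (S (2 * i)) with (2 * i + 1)%nat by lia.
      rewrite div_double1, pow_sign_odd by ring; unfold dseq; field.
    + rewrite spread_odd; replace (S (2 * i + 1)) with (2 * S i)%nat by lia.
      rewrite pow_sign_even by ring; field.
  - intros z z0; unfold Vfun; cbv beta; simpl pow; field; auto.
Qed.

Lemma profile_stabilized z : 0 < z < 1 -> profile N z = K (Ufun z - Vfun z) (Ufun z + Vfun z).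
Proof.
  intros Hz; pose proof (profile_bounds M z HmM Hz) as Hb; unfold profile in Hb.
  replace (Ufun z - Vfun z) with (Afun 1 z) by (unfold Ufun, Vfun; field).
  replace (Ufun z + Vfun z) with (Afun (-1) z) by (unfold Ufun, Vfun; field).
  unfold Afun, profile; rewrite Hst by lra.
  rewrite (HsN (M (1 - z) (1 + z)) (1 + z)) by lra.
  do 2 f_equal; ring.
Qed.

(** [U -> 1] and [V = O(z)], with [|V| < U] since both arguments of [K] are positive. *)
Lemma UV_bounds : exists C, 0 <= C /\ near0 posz (fun z =>
  Rabs (Vfun z) < Ufun z /\ Rabs (Vfun z) <= C * Rabs z /\ 1 / 2 <= Ufun z <= 3 / 2).
Proof.
  pose proof (coef0_one N aN HmN HhN HaN) as HN0.
  pose proof (tends_bounded _ _ _ (expands_tends _ _ _ _ (expands_Vfun_div 0))) as HV.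
  set (l := spread (dseq aM aN) 0%nat) in HV.
  exists (Rabs l + 1); split; [pose proof (Rabs_pos l); lra|].
  pose proof (expands_tends _ _ _ _ (expands_Ufun 0)) as HU.
  change (spread (sseq aM aN) 0%nat) with (sseq aM aN 0) in HU; rewrite sseq_0 in HU by auto.
  eapply near0_impl; [|exact (near0_and _ _ _ (near0_and _ _ _ HV (HU (1 / 2) ltac:(lra)))
                                   (near0_lt posz 1 ltac:(lra)))].
  intros z Hz z0 [[HVb HUb] Hz1]; cbv beta in *; unfold posz in Hz.
  rewrite Rabs_pos_eq in Hz1 by lra; rewrite (Rabs_pos_eq z) by lra.
  pose proof (profile_bounds M z HmM ltac:(lra)).
  assert (0 < Afun 1 z) by (unfold Afun; apply mean_pos; auto; lra).
  assert (0 < Afun (-1) z) by (unfold Afun; apply mean_pos; auto; lra).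
  apply Rabs_le_between in HUb; repeat split; try lra.
  - apply Rabs_def1; unfold Ufun, Vfun; lra.
  - replace (Vfun z) with (Vfun z / z * z) by (field; auto).
    rewrite Rabs_mult, (Rabs_pos_eq z) by lra; apply Rmult_le_compat_r; lra.
Qed.

(** Comparing the coefficients of [z^(2m)] on both sides of the stabilization identity. *)
Lemma coef_identity m : aN m =
  sum_f_R0 (fun j => aK j * pair_coef (spread (dseq aM aN)) (spread (sseq aM aN)) j (2 * m)) m.
Proof.
  pose proof (coef0_one N aN HmN HhN HaN) as HN0.
  destruct UV_bounds as [C [HC Huv]].
  assert (Hd0 : spread (dseq aM aN) 0%nat <> 0)
    by (change (dseq aM aN 0 <> 0); rewrite dseq_0 by auto; lra).
  assert (Hs0 : spread (sseq aM aN) 0%nat <> 0)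
    by (change (sseq aM aN 0 <> 0); rewrite sseq_0 by auto; lra).
  assert (Hterm : forall j, (j <= m)%nat ->
    expands posz (fun z => Vfun z ^ (2 * j) * powerRZ (Ufun z) (1 - 2 * Z.of_nat j))
      (pair_coef (spread (dseq aM aN)) (spread (sseq aM aN)) j) (2 * m)).
  { intros j _; eapply expands_congr;
      [|exact (expands_pair _ _ _ _ _ j _ (expands_Vfun_div _) Hd0 (expands_Ufun _) Hs0)].
    intros z z0; cbv beta; do 2 f_equal; field; auto. }
  rewrite <- (spread_even aN m).
  apply (expands_unique posz (profile N) (spread aN) (fun L => sum_f_R0 (fun j =>
           aK j * pair_coef (spread (dseq aM aN)) (spread (sseq aM aN)) j L) m)
           (2 * m) dense0_posz (expands_profile N aN m HhN HaN)); [|lia].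
  eapply expands_congr_near; [|exact (expands_mean_series posz K aK Ufun Vfun C (1 / 2) (3 / 2)
    m (2 * m) _ HmK HsK HhK HaK ltac:(lra) HC ltac:(lia) Huv Hterm)].
  eapply near0_impl; [|exact (near0_lt posz 1 ltac:(lra))].
  intros z Hz _ Hz1; cbv beta in *; unfold posz in Hz; rewrite Rabs_pos_eq in Hz1 by lra.
  symmetry; apply profile_stabilized; lra.
Qed.

(** Solving the coefficient identity for [a^N_m], which occurs on both sides. *)
Lemma aN_recurrence m : (1 <= m)%nat -> aN m = recurrence_rhs aM aN aK m.
Proof.
  intros Hm; pose proof (coef_identity m) as E.
  pose proof (coef0_one K aK HmK HhK HaK); pose proof (coef0_one N aN HmN HhN HaN).
  rewrite pair_series_split in E by auto.
  destruct m as [|m]; [lia|]; unfold recurrence_rhs.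
  rewrite sseq_split in E; replace (S m - 1)%nat with m in * by lia.
  assert (HQ : 1 < 2 ^ (2 * S m)) by (apply Rlt_pow_R1; lra || lia).
  set (Q := 2 ^ (2 * S m)) in *; set (a := aN (S m)) in *.
  replace (/ 2 * inner aM aN m (2 * S m) + _) with (a - a * / Q) by lra.
  field; lra.
Qed.

End Stabilization.

Theorem theorem3p5 (M N K : R -> R -> R) (aM aN aK : nat -> R) :
  is_mean M -> is_symmetric M -> is_homogeneous M -> has_sym_asymp_exp M aM ->
  is_mean N -> is_symmetric N -> is_homogeneous N -> has_sym_asymp_exp N aN ->
  is_mean K -> is_symmetric K -> is_homogeneous K -> has_sym_asymp_exp K aK ->
  is_stable K -> is_stable M -> is_stabilizable K M N ->
  aN 0%nat = 1 /\
  (forall m : nat, (1 <= m)%nat ->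
     aN m = 2 ^ (2 * m) / (2 ^ (2 * m) - 1) *
       ( / 2 * inner aM aN (m - 1) (2 * m)
         + sum_f_R0 (fun j => aK (S j) *
             sum_f_R0 (fun k => P k (2 * Z.of_nat (S j))%Z (dseq aM aN)
                         * P (m - S j - k) (1 - 2 * Z.of_nat (S j))%Z (sseq aM aN))
                      (m - S j)) (m - 1))) /\
  aN 1%nat = / 3 * (aK 1%nat + 2 * aM 1%nat).
Proof.
  intros HmM _ HhM HaM HmN HsN HhN HaN HmK HsK HhK HaK _ _ Hst.
  pose proof (coef0_one N aN HmN HhN HaN) as HN0.
  pose proof (aN_recurrence M N K aM aN aK HmM HhM HaM HmN HsN HhN HaN HmK HsK HhK HaK Hst)
    as Hrec.
  split; [exact HN0|split; [exact Hrec|]].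
  rewrite Hrec by lia; now apply recurrence_rhs_1.
Qed.
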